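(* Let $K$ be a random string in $\{0,1\}^N$ (with arbitrary distribution), and let $p_1,\dots,p_d\in\{1,\dots,N\}$ be fixed probes. Let $c'$ be a Bernoulli$(1/2)$ random variable and for $S\subseteq\{1,\dots,d\}$ define $c(S) := \bigoplus_{i\in S} K[p_i]$ and $d(S) := \|\mathcal L(c(S)) - \mathcal L(c')\|_{TV}$. If $\mathcal S$ is a uniformly random subset of $\{1,\dots,d\}$, then \[ \mathbb E\big[d(\mathcal S)\big] \le \frac12\sqrt{\sum_{y\in\{0,1\}^d}\mathbb P\big((K[p_1],\dots,K[p_d]) = y\big)^2}. \]
   Context: $K[i]$ denotes the $i$-th bit of $K$. For probability distributions $\mu,\nu$ on a finite set $\Omega$, $\|\mu-\nu\|_{TV} = \frac12\sum_{x\in\Omega}|\mu(x)-\nu(x)|$; $\mathcal L(Z)$ is the law of $Z$. *)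

From HB Require Import structures.
From mathcomp Require Import all_boot all_order all_algebra.
Set Implicit Arguments. Unset Strict Implicit. Unset Printing Implicit Defensive.
Import Order.TTheory GRing.Theory Num.Theory.
Local Open Scope ring_scope.

Definition is_distr (R : numDomainType) (T : finType) (P : {ffun T -> R}) : Prop :=
  (forall t, 0 <= P t) /\ \sum_(t : T) P t = 1.

Definition law (R : numDomainType) (T U : finType) (P : {ffun T -> R}) (X : T -> U)
  : {ffun U -> R} := [ffun u => \sum_(t : T | X t == u) P t].

Definition tv (R : numFieldType) (U : finType) (mu nu : {ffun U -> R}) : R :=
  2^-1 * \sum_(u : U) `|mu u - nu u|.

Definition bern_half (R : numFieldType) : {ffun bool -> R} := [ffun _ => 2^-1].

(* Strings in {0,1}^N; K[i] is K i, bits indexed by 'I_N (0-based). *)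
Definition bitstring (N : nat) := {ffun 'I_N -> bool}.

Definition cS (N d : nat) (p : 'I_d -> 'I_N) (S : {set 'I_d}) (K : bitstring N) : bool :=
  \big[addb/false]_(i in S) K (p i).

Definition dS (R : numFieldType) (N d : nat) (P : {ffun bitstring N -> R})
  (p : 'I_d -> 'I_N) (S : {set 'I_d}) : R :=
  tv (law P (cS p S)) (bern_half R).

Definition probe (N d : nat) (p : 'I_d -> 'I_N) (K : bitstring N) : {ffun 'I_d -> bool} :=
  [ffun i => K (p i)].

(* With the Walsh characters chi_S(y) = (-1)^(sum_(i in S) y_i) of {0,1}^d and
   q the law of the probed vector, the distance of c(S) from a fair coin is
   |E chi_S| / 2, and E chi_S is the Walsh coefficient of q at S.  By Parseval
   the quadratic mean of these coefficients over all S is sqrt(sum_y q(y)^2),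
   and the mean of their absolute values is at most their quadratic mean. *)

From HB Require Import structures.
From mathcomp Require Import all_boot all_order all_algebra.
From mathcomp Require Import ring.
Set Implicit Arguments. Unset Strict Implicit. Unset Printing Implicit Defensive.
Import Order.TTheory GRing.Theory Num.Theory.
Local Open Scope ring_scope.

Lemma card_set_type (T : finType) : #|{set T}| = (2 ^ #|T|)%N.
Proof. by rewrite -[LHS]cardsT -powersetT card_powerset cardsT. Qed.

Lemma sum_set_prod (R : comPzSemiRingType) (I : finType) (s : I -> R) :
  \sum_(S : {set I}) \prod_(i in S) s i = \prod_i (1 + s i).
Proof.
under [RHS]eq_bigr do rewrite addrC.
by rewrite bigA_distr; apply: eq_bigr => S _; rewrite big_mkcond.
Qed.

Lemma signr_bigaddb (R : pzRingType) (I : finType) (S : {set I}) (b : I -> bool) :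
  (-1) ^+ (\big[addb/false]_(i in S) b i) = \prod_(i in S) (-1) ^+ b i :> R.
Proof. exact: (big_morph _ (@signr_addb R)). Qed.

Definition walsh {R : pzRingType} {I : finType} (S : {set I}) (x : {ffun I -> bool}) : R :=
  \prod_(i in S) (-1) ^+ x i.

Lemma walsh_orthogonal (R : comPzRingType) (I : finType) (x y : {ffun I -> bool}) :
  \sum_(S : {set I}) walsh S x * walsh S y = if x == y then 2 ^+ #|I| else 0 :> R.
Proof.
under eq_bigr do rewrite /walsh -big_split.
rewrite sum_set_prod /=; case: eqP => [<- | x_neq_y].
  by rewrite -prodr_const; apply: eq_bigr => i _; rewrite -expr2 sqrr_sign.
have [i xy_i] : exists i, x i != y i.
  apply/existsP; apply: contra_notT x_neq_y => /existsPn x_eq_y.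
  by apply/ffunP => i; apply/eqP/negPn.
rewrite (bigD1 i) //=; suff -> : 1 + (-1) ^+ x i * (-1) ^+ y i = 0 :> R by rewrite mul0r.
by move: xy_i; case: (x i); case: (y i); rewrite //= ?expr0 ?expr1 ?mulr1 ?mul1r subrr.
Qed.

Lemma walsh_parseval (R : comPzRingType) (I : finType) (q : {ffun I -> bool} -> R) :
  \sum_(S : {set I}) (\sum_x q x * walsh S x) ^+ 2 = 2 ^+ #|I| * \sum_x q x ^+ 2.
Proof.
transitivity (\sum_(S : {set I}) \sum_x \sum_y q x * q y * (walsh S x * walsh S y)).
  apply: eq_bigr => S _; rewrite expr2 mulr_suml; apply: eq_bigr => x _.
  by rewrite mulr_sumr; apply: eq_bigr => y _; ring.
rewrite exchange_big [RHS]mulr_sumr; apply: eq_bigr => x _ /=.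
rewrite exchange_big; under eq_bigr do rewrite -mulr_sumr walsh_orthogonal.
rewrite (bigD1 x) //= eqxx big1 ?addr0 => [|y /negPf]; first by ring.
by rewrite eq_sym => ->; rewrite mulr0.
Qed.

Lemma sum_law (R : numDomainType) (T U : finType) (P : {ffun T -> R}) (X : T -> U)
    (f : U -> R) :
  \sum_t P t * f (X t) = \sum_u law P X u * f u.
Proof.
rewrite (partition_big X predT) //=; apply: eq_bigr => u _.
by rewrite ffunE mulr_suml; apply: eq_bigr => t /eqP ->.
Qed.

Lemma tv_law_bern_half (R : numFieldType) (T : finType) (P : {ffun T -> R})
    (X : T -> bool) :
  \sum_t P t = 1 -> tv (law P X) (bern_half R) = 2^-1 * `|\sum_t P t * (-1) ^+ X t|.
Proof.
move=> P1; rewrite /tv big_bool !ffunE.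
set l1 := \sum_(t | X t == true) P t; set l0 := \sum_(t | X t == false) P t.
have split_sum (F : T -> R) :
    \sum_t F t = \sum_(t | X t == true) F t + \sum_(t | X t == false) F t.
  by rewrite (bigID (fun t => X t == true)); congr (_ + _); apply: eq_bigl => t; case: (X t).
have l0E : l0 = 1 - l1 by rewrite -P1 split_sum addrC addKr.
have -> : \sum_t P t * (-1) ^+ X t = l0 - l1.
  rewrite split_sum addrC -sumrN; congr (_ + _); apply: eq_bigr => t /eqP ->.
    by rewrite mulr1.
  by rewrite mulrN1.
rewrite l0E.
have -> : 1 - l1 - 2^-1 = - (l1 - 2^-1) by field.
have -> : 1 - l1 - l1 = - (2 * (l1 - 2^-1)) by field.
by rewrite !normrN normrM ger0_norm // mulr_natl mulr2n.
Qed.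

Lemma mean_norm_le_sqrt_mean_sqr (R : rcfType) (I : finType) (a : I -> R) :
  #|I|%:R^-1 * \sum_i `|a i| <= Num.sqrt (#|I|%:R^-1 * \sum_i a i ^+ 2).
Proof.
have [I0 | I_gt0] := posnP #|I|; first by rewrite I0 invr0 mul0r sqrtr_ge0.
set n : R := #|I|%:R; have n_gt0 : 0 < n by rewrite ltr0n.
set A := n^-1 * \sum_i `|a i|.
have A_ge0 : 0 <= A by rewrite mulr_ge0 ?invr_ge0 ?ler0n ?sumr_ge0.
have sum_normE : \sum_i `|a i| = n * A by rewrite mulrA divff ?mul1r ?gt_eqF.
have deviationE : \sum_i (`|a i| - A) ^+ 2 = \sum_i a i ^+ 2 - n * A ^+ 2.
  under eq_bigr do rewrite sqrrB (real_normK (num_real _)).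
  rewrite !big_split /= sumrN sumrMnl -mulr_suml sumr_const sum_normE -/n.
  by rewrite -[A ^+ 2 *+ _]mulr_natr; ring.
have A2_le : A ^+ 2 <= n^-1 * \sum_i a i ^+ 2.
  rewrite -(ler_pM2l n_gt0) mulVKf ?gt_eqF // -subr_ge0 -deviationE.
  by apply: sumr_ge0 => i _; apply: sqr_ge0.
by rewrite -(ger0_norm A_ge0) -sqrtr_sqr ler_sqrt // (le_trans _ A2_le) ?sqr_ge0.
Qed.

Theorem corollary1 (R : rcfType) (N d : nat) (P : {ffun bitstring N -> R})
  (hP : is_distr P) (p : 'I_d -> 'I_N) :
  (2 ^+ d)^-1 * \sum_(S : {set 'I_d}) dS P p S
  <= 2^-1 * Num.sqrt (\sum_(y : {ffun 'I_d -> bool}) (law P (probe p) y) ^+ 2).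
Proof.
set q := law P (probe p).
pose bias (S : {set 'I_d}) : R := \sum_y q y * walsh S y.
have dS_bias S : dS P p S = 2^-1 * `|bias S|.
  rewrite /dS tv_law_bern_half; last by case: hP.
  rewrite /bias -sum_law; congr (_ * `|_|); apply: eq_bigr => K _.
  by rewrite /cS signr_bigaddb; congr (_ * _); apply: eq_bigr => i _; rewrite ffunE.
have card_sets_d : #|{set 'I_d}|%:R = 2 ^+ d :> R.
  by rewrite card_set_type card_ord natrX.
under eq_bigr do rewrite dS_bias.
rewrite -mulr_sumr mulrCA ler_pM2l ?invr_gt0 ?ltr0n // -card_sets_d.
apply: le_trans (mean_norm_le_sqrt_mean_sqr bias) _.
by rewrite walsh_parseval card_ord card_sets_d mulKf ?expf_neq0 ?pnatr_eq0.
Qed.
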